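(* Let $\omega\in\mathbb{R}^d$, let $I_\omega=\{(k,l)\in\mathbb{Z}^d\times\mathbb{Z}:\langle k,\omega\rangle+l=0\}$, let $c$ be the rank of the lattice $I_\omega$, and let $(p_1,q_1),\dots,(p_c,q_c)\in I_\omega$ be linearly independent. Then $$\mathbb{X}_{p,q}\cap\mathcal{B}_\omega=\overline{\mathcal{B}}_\omega,$$ i.e. every Birkhoff configuration $x$ of rotation vector $\omega$ with $\tau_{p_j,q_j}x=x$ for $j=1,\dots,c$ satisfies $\tau_{k,l}x=x$ for all $(k,l)\in I_\omega$.
   Context: For $(k,l)\in\mathbb{Z}^d\times\mathbb{Z}$ the shift operator $\tau_{k,l}:\mathbb{R}^{\mathbb{Z}^d}\to\mathbb{R}^{\mathbb{Z}^d}$ is $(\tau_{k,l}x)_i=x_{i+k}+l$. On $\mathbb{R}^{\mathbb{Z}^d}$: $x\le y$ iff $x_i\le y_i$ for all $i$. A configuration $x$ is Birkhoff if for every $(k,l)$ either $\tau_{k,l}x\ge x$ or $\tau_{k,l}x\le x$. A vector $\omega\in\mathbb{R}^d$ is the rotation vector of $x$ if for every $i\in\mathbb{Z}^d$, $\lim_{n\to\infty}x_{ni}/n=\langle\omega,i\rangle$. $\mathcal{B}_\omega$ denotes the set of Birkhoff configurations with rotation vector $\omega$, and $\overline{\mathcal{B}}_\omega=\{x\in\mathcal{B}_\omega:\tau_{k,l}x=x\text{ whenever }\langle\omega,k\rangle+l=0\}$. $\mathbb{X}_{p,q}=\{x\in\mathbb{R}^{\mathbb{Z}^d}:\tau_{p_j,q_j}x=x\text{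 for all }j=1,\dots,c\}$. *)

From Stdlib Require Import Reals.
From HB Require Import structures.
From mathcomp Require Import all_boot all_order all_algebra.
Set Implicit Arguments. Unset Strict Implicit. Unset Printing Implicit Defensive.

Definition Zd (d : nat) := 'rV[int]_d.

Definition int2R (z : int) : R :=
  match z with
  | Posz n => INR n
  | Negz n => Ropp (INR n.+1)
  end.

Definition config (d : nat) := Zd d -> R.

Definition ipR (d : nat) (omega : 'I_d -> R) (k : Zd d) : R :=
  \big[Rplus/R0]_(i < d) Rmult (omega i) (int2R (k ord0 i)).

Definition tau (d : nat) (k : Zd d) (l : int) (x : config d) : config d :=
  fun i => Rplus (x (i + k)%R) (int2R l).

Definition cle (d : nat) (x y : config d) : Prop := forall i, Rle (x i) (y i).

Definition Birkhoff (d : nat) (x : config d) : Prop :=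
  forall (k : Zd d) (l : int), cle x (tau k l x) \/ cle (tau k l x) x.

Definition rotation_vector (d : nat) (omega : 'I_d -> R) (x : config d) : Prop :=
  forall i : Zd d, Un_cv (fun n : nat => Rdiv (x (i *+ n)%R) (INR n)) (ipR omega i).

Definition in_B (d : nat) (omega : 'I_d -> R) (x : config d) : Prop :=
  Birkhoff x /\ rotation_vector omega x.

Definition in_I (d : nat) (omega : 'I_d -> R) (k : Zd d) (l : int) : Prop :=
  Rplus (ipR omega k) (int2R l) = R0.

Definition in_Bbar (d : nat) (omega : 'I_d -> R) (x : config d) : Prop :=
  in_B omega x /\ (forall k l, in_I omega k l -> tau k l x = x).

Definition in_X (d c : nat) (p : 'I_c -> Zd d) (q : 'I_c -> int) (x : config d) : Prop :=
  forall j, tau (p j) (q j) x = x.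

(* linear independence of (p_j, q_j)_{j<c} in Z^d x Z (over Z, equivalently Q) *)
Definition lin_indep (d c : nat) (p : 'I_c -> Zd d) (q : 'I_c -> int) : Prop :=
  forall a : 'I_c -> int,
    (\sum_(j < c) a j *: p j)%R = 0%R -> (\sum_(j < c) a j * q j)%R = 0%R ->
    forall j, a j = 0%R.

Definition rank_I (d : nat) (omega : 'I_d -> R) (c : nat) : Prop :=
  (exists (p : 'I_c -> Zd d) (q : 'I_c -> int),
      (forall j, in_I omega (p j) (q j)) /\ lin_indep p q) /\
  (forall (p : 'I_c.+1 -> Zd d) (q : 'I_c.+1 -> int),
      (forall j, in_I omega (p j) (q j)) -> ~ lin_indep p q).

From Stdlib Require Import Reals Classical FunctionalExtensionality.
From HB Require Import structures.
From mathcomp Require Import all_boot all_order all_algebra.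
From mathcomp Require Import ssrZ.
Import GRing.Theory.
Set Implicit Arguments. Unset Strict Implicit.

(* Fix a Birkhoff configuration x and consider its group of
   symmetries  Sym(x) = {(k,l) : tau_{k,l} x = x}.  Since (k,l) |-> tau_{k,l}
   is an action of the group Z^d x Z on configurations, Sym(x) is a subgroup,
   so it contains every integer combination of the (p_j,q_j) as soon as
   x is in X_{p,q}.  Moreover Sym(x) is "saturated" for Birkhoff x: each
   tau_{k,l} is monotone and x is comparable with tau_{k,l} x, so the orbit
   x, tau x, tau^2 x, ... is monotone and cannot return to x unless
   tau_{k,l} x = x; hence a.(k,l) in Sym(x) with a <> 0 forces (k,l) in
   Sym(x).  Finally, for (k,l) in I_omega the c+1 vectors (p_j,q_j), (k,l)
   of I_omega are dependent (c is the rank), and since the (p_j,q_j) are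
   independent the dependence relation has a nonzero coefficient a on
   (k,l), i.e. a.(k,l) is an integer combination of the (p_j,q_j). *)

Local Open Scope ring_scope.

Lemma int2R_Z (z : int) : int2R z = IZR (Z_of_int z).
Proof.
case: z => n /=; first by rewrite INR_IZR_INZ.
by rewrite opp_IZR -INR_IZR_INZ addn1.
Qed.

Lemma int2RD (a b : int) : int2R (a + b) = Rplus (int2R a) (int2R b).
Proof. by rewrite !int2R_Z raddfD /= plus_IZR. Qed.

Lemma tau_comp d (k k' : Zd d) (l l' : int) (x : config d) :
  tau k l (tau k' l' x) = tau (k + k') (l + l') x.
Proof.
apply: functional_extensionality => i; rewrite /tau int2RD.
by rewrite addrA Rplus_assoc (Rplus_comm (int2R l')).
Qed.

Lemma tau0 d (x : config d) : tau 0 0 x = x.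
Proof.
by apply: functional_extensionality => i; rewrite /tau addr0 Rplus_0_r.
Qed.

Lemma tau_mono d (k : Zd d) (l : int) (x y : config d) :
  cle x y -> cle (tau k l x) (tau k l y).
Proof. by move=> hxy i; apply: Rplus_le_compat_r. Qed.

Lemma cle_refl d (x : config d) : cle x x.
Proof. by move=> i; apply: Rle_refl. Qed.

Lemma cle_trans d (x y z : config d) : cle x y -> cle y z -> cle x z.
Proof. by move=> hxy hyz i; apply: Rle_trans (hxy i) (hyz i). Qed.

Lemma cle_anti d (x y : config d) : cle x y -> cle y x -> x = y.
Proof.
by move=> hxy hyx; apply: functional_extensionality => i; apply: Rle_antisym.
Qed.

Section SymmetryGroup.
Variables (d : nat) (x : config d).

Definition symmetry (k : Zd d) (l : int) : Prop := tau k l x = x.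

Lemma symmetryD k l k' l' :
  symmetry k l -> symmetry k' l' -> symmetry (k + k') (l + l').
Proof. by rewrite /symmetry => h h'; rewrite -tau_comp h' h. Qed.

Lemma symmetryN k l : symmetry k l -> symmetry (- k) (- l).
Proof. by rewrite /symmetry => h; rewrite -{1}h tau_comp !addNr tau0. Qed.

Lemma symmetryZ k l (a : int) : symmetry k l -> symmetry (a *: k) (a * l).
Proof.
move=> h; elim/int_rec: a => [|n IH|n IH].
- by rewrite scale0r mul0r /symmetry tau0.
- by rewrite intS scalerDl mulrDl scale1r mul1r; apply: symmetryD.
- rewrite intS opprD scalerDl mulrDl scaleN1r mulN1r.
  by apply: symmetryD; [apply: symmetryN | ].
Qed.

Lemma symmetry_sum c (p : 'I_c -> Zd d) (q : 'I_c -> int) (a : 'I_c -> int) :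
  (forall j, symmetry (p j) (q j)) ->
  symmetry (\sum_(j < c) a j *: p j) (\sum_(j < c) a j * q j).
Proof.
move=> h; apply: (big_ind2 symmetry); first by rewrite /symmetry tau0.
  exact: symmetryD.
by move=> j _; apply: symmetryZ.
Qed.

End SymmetryGroup.

(* A monotone map f on a preordered type: if x <= f x and some iterate
   f^(n+1) brings x back, then f x <= x (the orbit is an increasing loop). *)
Lemma periodic_orbit_le (T : Type) (le : T -> T -> Prop) (f : T -> T) (x : T) n :
  (forall a, le a a) -> (forall a b e, le a b -> le b e -> le a e) ->
  (forall a b, le a b -> le (f a) (f b)) ->
  le x (f x) -> iter n.+1 f x = x -> le (f x) x.
Proof.
move=> refl trans mono hx hper.
have up y : le y (f y) -> forall m, le y (iter m f y).
  move=> hy; have step m : le (iter m f y) (iter m.+1 f y).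
    by elim: m => [|m IH] //=; apply: mono.
  by elim=> [|m IH]; [apply: refl | apply: trans IH (step m)].
by rewrite -{2}hper iterSr; apply/up/mono.
Qed.

(* For Birkhoff x, x is comparable with tau_{k,l} x, so a periodic orbit of
   tau_{k,l} through x must be a fixed point. *)
Lemma Birkhoff_symmetry_iter d (x : config d) k l n :
  Birkhoff x -> iter n.+1 (tau k l) x = x -> symmetry x k l.
Proof.
move=> hB hper; have mono := @tau_mono d k l.
case: (hB k l) => hx; apply: cle_anti => //.
  exact: periodic_orbit_le (@cle_refl d) (@cle_trans d) mono hx hper.
apply: (periodic_orbit_le (le := fun a b => cle b a)) hx hper => //.
- exact: cle_refl.
- by move=> a b e hab hbe; apply: cle_trans hbe hab.
- by move=> a b; apply: mono.
Qed.

Lemma Birkhoff_symmetry_root d (x : config d) k l (a : int) :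
  Birkhoff x -> a <> 0 -> symmetry x (a *: k) (a * l) -> symmetry x k l.
Proof.
move=> hB ha h.
have tau_mul n : tau (k *+ n) (l *+ n) x = iter n (tau k l) x.
  elim: n => [|n IH]; first by rewrite !mulr0n tau0.
  by rewrite iterS -IH tau_comp -!mulrS.
have hn n : symmetry x (k *+ n.+1) (l *+ n.+1) -> symmetry x k l.
  by move=> h'; apply: (Birkhoff_symmetry_iter (n := n) hB); rewrite -tau_mul.
case: a ha h => [[|n]|n] ha h //; apply: (hn n).
  by rewrite -natz scaler_nat mulr_natl in h.
move/symmetryN: h; rewrite NegzE scaleNr mulNr !opprK.
by rewrite -natz scaler_nat mulr_natl.
Qed.

Definition extend (T : Type) (c : nat) (f : 'I_c -> T) (t : T) : 'I_c.+1 -> T :=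
  fun j => if unlift ord_max j is Some i then f i else t.

(* The first c indices of 'I_c.+1, as they appear in big_ord_recr. *)
Lemma widen_lift_max c (i : 'I_c) : widen_ord (leqnSn c) i = lift ord_max i.
Proof. by apply: val_inj; rewrite /= /bump leqNgt ltn_ord. Qed.

Lemma extend_widen (T : Type) c (f : 'I_c -> T) t (i : 'I_c) :
  extend f t (widen_ord (leqnSn c) i) = f i.
Proof. by rewrite widen_lift_max /extend liftK. Qed.

Lemma extend_max (T : Type) c (f : 'I_c -> T) t : extend f t ord_max = t.
Proof. by rewrite /extend unlift_none. Qed.

Lemma big_extend (T : Type) (V : nmodType) c (f : 'I_c -> T) t
    (F : 'I_c.+1 -> T -> V) :
  \sum_(j < c.+1) F j (extend f t j)
  = \sum_(i < c) F (widen_ord (leqnSn c) i) (f i) + F ord_max t.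
Proof.
by rewrite big_ord_recr extend_max; under eq_bigr do rewrite extend_widen.
Qed.

Lemma dependent_extension d c (p : 'I_c -> Zd d) (q : 'I_c -> int) k l :
  lin_indep p q -> ~ lin_indep (extend p k) (extend q l) ->
  exists (a : int) (b : 'I_c -> int), a <> 0 /\
    a *: k = \sum_(j < c) b j *: p j /\ a * l = \sum_(j < c) b j * q j.
Proof.
move=> hind hdep; apply: NNPP => hno; apply: hdep => e.
rewrite (big_extend p k (fun j v => e j *: v)).
rewrite (big_extend q l (fun j v => e j * v)).
set e' := fun i => e (widen_ord (leqnSn c) i) => hk hl.
have emax : e ord_max = 0.
  apply: NNPP => hne; apply: hno; exists (e ord_max), (fun i => - e' i).
  split=> //; split.
  - move/eqP: hk; rewrite addrC addr_eq0 => /eqP ->.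
    by rewrite -sumrN; apply: eq_bigr => i _; rewrite scaleNr.
  - move/eqP: hl; rewrite addrC addr_eq0 => /eqP ->.
    by rewrite -sumrN; apply: eq_bigr => i _; rewrite mulNr.
rewrite emax scale0r mul0r !addr0 in hk hl.
move=> j; case: (unliftP ord_max j) => [i ->|-> //].
by rewrite -widen_lift_max; apply: (hind e').
Qed.

Theorem mainTheorem2 (d : nat) (omega : 'I_d -> R) (c : nat)
    (p : 'I_c -> Zd d) (q : 'I_c -> int) :
  rank_I omega c ->
  (forall j, in_I omega (p j) (q j)) ->
  lin_indep p q ->
  forall x : config d, (in_X p q x /\ in_B omega x) <-> in_Bbar omega x.
Proof.
move=> [_ hmax] hI hind x.
split=> [[hX hB] | [hB hfix]]; last by split=> // j; apply: hfix.
split=> // k l hkl.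
have hI' j : in_I omega (extend p k j) (extend q l j).
  by rewrite /extend; case: (unlift ord_max j).
have [a [b [ha [hk hl]]]] := dependent_extension hind (hmax _ _ hI').
apply: (Birkhoff_symmetry_root hB.1 ha).
by rewrite hk hl; apply: symmetry_sum.
Qed.
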